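(* Let $q=2$ and let $C^{\otimes 2}=(\mathbb{G}_a^2,\Phi)$ be the $T$-module with \[\Phi(T)=\begin{pmatrix}T&1\\0&T\end{pmatrix}+\begin{pmatrix}0&0\\1&0\end{pmatrix}\tau.\] Set $t=T^2$ and $\Psi(t)=\Phi(T^2)$, so that $(\mathbb{G}_a^2,\Psi)$ is a $t$-module over $\mathbb{F}_2[t]$. Then the $t$-module $(\mathbb{G}_a^2,\Psi)$ has rank $2$, and its sub-$t$-module $0\times\mathbb{G}_a$ has rank $1$.
   Context: $\tau$ is the Frobenius $z\mapsto z^2$, acting coordinatewise, with $\tau M=M^{(2)}\tau$ for matrices. Explicitly $\Psi(t)=\begin{pmatrix}t&0\\0&t\end{pmatrix}+\begin{pmatrix}1&0\\ \sqrt{t}+t&1\end{pmatrix}\tau$ (here $\sqrt t=T$). A sub-$t$-module is a reduced connected algebraic subgroup stable under $\Psi(t)$. With $\mathcal{F}=\mathbb{F}_2(T)$ the field of coefficients, the rank of a $t$-module (or sub-$t$-module) $\mathcal{B}$ is the rank over $\mathcal{F}[t]$ of $\mathrm{Hom}_{\mathcal{F}}(\mathcal{B},\mathbb{G}_a)$, the $\mathbb{F}_2$-linear algebraic group homomorphisms $\mathcal{B}\to\mathbb{G}_a$ defined over $\mathcal{F}$, which is an $\mathcal{F}[t]$-module via left multiplication by $\mathcal{F}$ and $t\cdot f=f\circ\Psi(t)$. *)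

From HB Require Import structures.
From mathcomp Require Import all_boot all_order all_algebra.
From mathcomp Require Import fraction.
Set Implicit Arguments. Unset Strict Implicit. Unset Printing Implicit Defensive.
Import Order.TTheory GRing.Theory Num.Theory.
Local Open Scope ring_scope.

Definition FF := {fraction {poly 'F_2}}.
Definition Tf : FF := tofrac ('X : {poly 'F_2}).

(* Twisted polynomials F{tau}: a polynomial p = \sum_i p_i X^i in {poly FF}
   represents the F_2-linear (additive) map  z |-> \sum_i p_i z^(2^i),
   i.e. \sum_i p_i tau^i.  Composition (product in F{tau}):
   (a tau^i)(b tau^j) = a b^(2^i) tau^(i+j). *)
Definition frobn (n : nat) (x : FF) : FF := x ^+ (2 ^ n).

Definition tmul (p q : {poly FF}) : {poly FF} :=
  \sum_(i < size p) \sum_(j < size q) (p`_i * frobn i q`_j) *: 'X^(i + j).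

Definition tmxmul m n p (A : 'M[{poly FF}]_(m, n)) (B : 'M[{poly FF}]_(n, p))
  : 'M[{poly FF}]_(m, p) :=
  \matrix_(i, j) \sum_(k < n) tmul (A i k) (B k j).

(* Phi(T) = [[T,1],[0,T]] + [[0,0],[1,0]] tau  (entry (i,j) : coordinate i
   of the output in terms of coordinate j of the input). *)
Definition PhiT : 'M[{poly FF}]_2 :=
  \matrix_(i < 2, j < 2)
    ((if i == j then Tf%:P else 0)
     + (if (val i == 0%N) && (val j == 1%N) then 1 else 0)
     + (if (val i == 1%N) && (val j == 0%N) then 'X else 0)).

Definition Psit : 'M[{poly FF}]_2 := tmxmul PhiT PhiT.

(* Rank of a module V over the polynomial ring F[t] (= {poly FF}), where the
   action of t is given by the additive map tact and F acts by scaling sc: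
   c . v = \sum_k c_k * (t^k . v). *)
Section Rank.
Variables (V : zmodType) (sc : FF -> V -> V) (tact : V -> V).

Definition polyact (c : {poly FF}) (v : V) : V :=
  \sum_(k < size c) sc c`_k (iter k tact v).

Definition lin_indep n (v : 'I_n -> V) : Prop :=
  forall c : 'I_n -> {poly FF},
    \sum_(i < n) polyact (c i) (v i) = 0 -> forall i, c i = 0.

Definition has_rank (r : nat) : Prop :=
  (exists v : 'I_r -> V, lin_indep v) /\
  (forall n (v : 'I_n -> V), lin_indep v -> (n <= r)%N).
End Rank.

(* Hom_F(G_a^2, G_a): row vectors of twisted polynomials f = (f_1, f_2),
   f(x,y) = f_1(x) + f_2(y); F acts by left multiplication,
   t . f = f o Psi(t). *)
Definition HomGa2 := 'rV[{poly FF}]_2.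
Definition sc2 (a : FF) (f : HomGa2) : HomGa2 := map_mx (fun p => a *: p) f.
Definition tact2 (f : HomGa2) : HomGa2 := tmxmul f Psit.

(* Psi(t)(0,y) = (Psit 0 1 (y), Psit 1 1 (y)); it lies
   in 0 x G_a iff Psit 0 1 = 0.  Hom_F(0 x G_a, G_a) = F{tau} (maps g(y)),
   with t . g = g o (Psi(t) restricted to 0 x G_a) = g o Psit 1 1. *)
Definition stable_0xGa : Prop := Psit 0 1 = 0.
Definition HomSub := {poly FF}.
Definition sc1 (a : FF) (g : HomSub) : HomSub := a *: g.
Definition tact1 (g : HomSub) : HomSub := tmul g (Psit 1 1).

From Pilot Require Import Defs.
From mathcomp Require Import all_boot all_algebra fraction ring.
Set Implicit Arguments. Unset Strict Implicit. Unset Printing Implicit Defensive.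
Import GRing.Theory.
Local Open Scope ring_scope.

(* Hom_F(0 x G_a, G_a) is the twisted polynomial ring F{tau}, on which t acts
   by right multiplication with the entry T^2 + tau of Psi(t).  This raises
   the tau-degree by one and keeps the leading coefficient, so the iterates
   t^k . 1 are monic of degree k and c |-> c . 1 is a bijection F[t] -> F{tau}:
   that module is free of rank 1.  In characteristic 2 the off-diagonal entry
   2T of Psi(t) vanishes and both diagonal entries are T^2 + tau, so on
   Hom_F(G_a^2, G_a) the first coordinate embeds the rank-1 module and the
   second one projects onto it; hence (1, 0), (0, 1) is a basis.  Finally a
   module generated by k <= 2 elements has no k + 1 independent ones, because
   every (k + 1) x k matrix over F[t] has a nonzero left kernel vector. *)

Lemma sum_ord2 (V : nmodType) (F : 'I_2 -> V) : \sum_(i < 2) F i = F 0 + F 1.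
Proof. by rewrite big_ord_recr big_ord1; congr (F _ + F _); apply: val_inj. Qed.

Lemma sum_ord3 (V : nmodType) (F : 'I_3 -> V) : \sum_(i < 3) F i = F 0 + F 1 + F 2.
Proof. by rewrite 2!big_ord_recr big_ord1; congr (F _ + F _ + F _); apply: val_inj. Qed.

Lemma ord2 (j : 'I_2) : j = 0 \/ j = 1.
Proof. by case: j => -[|[|//]] ?; [left|right]; apply: val_inj. Qed.

Lemma sum_ord_widen (V : nmodType) m n (F : nat -> V) : (m <= n)%N ->
  (forall i, (m <= i)%N -> F i = 0) -> \sum_(i < m) F i = \sum_(i < n) F i.
Proof.
move=> le_mn F0; rewrite (big_ord_widen n F le_mn) big_mkcond /=.
by apply: eq_bigr => i _; case: ifP => // /negbT; rewrite -leqNgt => /F0 ->.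
Qed.

Section RowsDependent.
Variable R : comNzRingType.

Definition rows_dependent m n :=
  forall A : 'M[R]_(m, n), exists2 d : 'rV_m, d != 0 & d *m A = 0.

Lemma row_neq0 n (d : 'rV[R]_n) i : d 0 i != 0 -> d != 0.
Proof. by apply: contraNneq => ->; rewrite mxE. Qed.

Lemma rows_dependent_2_1 : rows_dependent 2 1.
Proof.
move=> A; have rel (d : 'rV[R]_2) : d 0 0 * A 0 0 + d 0 1 * A 1 0 = 0 -> d *m A = 0.
  by move=> h; apply/rowP => j; rewrite (ord1 j) !mxE sum_ord2.
have [A0|A0] := eqVneq (A 0 0) 0.
  exists (\row_i [:: 1; 0]`_i).
    by apply: (@row_neq0 _ _ 0); rewrite mxE oner_neq0.
  by apply: rel; rewrite !mxE /= A0; ring.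
exists (\row_i [:: A 1 0; - A 0 0]`_i).
  by apply: (@row_neq0 _ _ 1); rewrite mxE /= oppr_eq0.
by apply: rel; rewrite !mxE /=; ring.
Qed.

(* The signed 2x2 minors always give a relation (a 3x3 determinant with a
   repeated column); when they all vanish, the first two rows already give one. *)
Lemma rows_dependent_3_2 : rows_dependent 3 2.
Proof.
move=> A; have rel (d : 'rV[R]_3) :
    (forall j, d 0 0 * A 0 j + d 0 1 * A 1 j + d 0 2 * A 2 j = 0) -> d *m A = 0.
  by move=> h; apply/rowP => j; rewrite !mxE sum_ord3 h.
pose minor (i i' : 'I_3) := A i 0 * A i' 1 - A i 1 * A i' 0.
pose cof : 'rV[R]_3 := \row_i [:: minor 1 2; - minor 0 2; minor 0 1]`_i.
have [cof0|] := eqVneq cof 0; last first.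
  exists cof => //; apply: rel => j; rewrite !mxE /= /minor.
  by case: (ord2 j) => ->; ring.
have minor01 : minor 0 1 = 0 by have /rowP/(_ 2) := cof0; rewrite !mxE.
have [A00|A00] := eqVneq (A 0 0) 0; last first.
  exists (\row_i [:: A 1 0; - A 0 0; 0]`_i).
    by apply: (@row_neq0 _ _ 1); rewrite mxE /= oppr_eq0.
  apply: rel => j; rewrite !mxE /=; case: (ord2 j) => ->; first by ring.
  apply: etrans (_ : _ = - minor 0 1) _; first by rewrite /minor; ring.
  by rewrite minor01 oppr0.
have [A01|A01] := eqVneq (A 0 1) 0; last first.
  exists (\row_i [:: A 1 1; - A 0 1; 0]`_i).
    by apply: (@row_neq0 _ _ 1); rewrite mxE /= oppr_eq0.
  apply: rel => j; rewrite !mxE /=; case: (ord2 j) => ->; last by ring.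
  by apply: etrans minor01; rewrite /minor; ring.
exists (\row_i [:: 1; 0; 0]`_i).
  by apply: (@row_neq0 _ _ 0); rewrite mxE oner_neq0.
by apply: rel => j; case: (ord2 j) => ->; rewrite !mxE /= ?A00 ?A01; ring.
Qed.

End RowsDependent.

(* At R := FF they are convertible to those of Defs, and
   working over an abstract R keeps rewriting from attempting conversions in
   F_2(T), whose elements are quotient representatives. *)
Section RtModules.
Variable R : comNzRingType.

Definition polyactR (V : zmodType) (sc : R -> V -> V) (tact : V -> V)
    (c : {poly R}) (v : V) : V :=
  \sum_(k < size c) sc c`_k (iter k tact v).

Definition lin_indepR (V : zmodType) (sc : R -> V -> V) (tact : V -> V) n (v : 'I_n -> V) :=
  forall c : 'I_n -> {poly R},
    \sum_(i < n) polyactR sc tact (c i) (v i) = 0 -> forall i, c i = 0.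

Definition has_rankR (V : zmodType) (sc : R -> V -> V) (tact : V -> V) (r : nat) :=
  (exists v : 'I_r -> V, lin_indepR sc tact v) /\
  (forall n (v : 'I_n -> V), lin_indepR sc tact v -> (n <= r)%N).

Record is_Rt_module (V : zmodType) (sc : R -> V -> V) (tact : V -> V) : Prop := {
  scDr : forall a, {morph sc a : x y / x + y};
  scDl : forall (a b : R) x, sc (a + b) x = sc a x + sc b x;
  scA : forall a b x, sc a (sc b x) = sc (a * b) x;
  scale1 : forall x, sc 1 x = x;
  tactD : {morph tact : x y / x + y};
  tact_sc : forall a x, tact (sc a x) = sc a (tact x) }.

Section PolyAction.
Variables (V : zmodType) (sc : R -> V -> V) (tact : V -> V).
Hypothesis modV : is_Rt_module sc tact.

Local Notation act := (polyactR sc tact).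

Lemma sc0 x : sc 0 x = 0.
Proof. by apply: (addrI (sc 0 x)); rewrite -(scDl modV) !addr0. Qed.

Lemma scr0 a : sc a 0 = 0.
Proof. by apply: (addrI (sc a 0)); rewrite -(scDr modV) !addr0. Qed.

Lemma tact0 : tact 0 = 0.
Proof. by apply: (addrI (tact 0)); rewrite -(tactD modV) !addr0. Qed.

Lemma polyact_widen n (c : {poly R}) v : (size c <= n)%N ->
  act c v = \sum_(k < n) sc c`_k (iter k tact v).
Proof.
move=> le_cn; rewrite /polyactR (sum_ord_widen (F := fun k => sc c`_k (iter k tact v)) le_cn) //.
by move=> k le_ck; rewrite nth_default // sc0.
Qed.

Lemma polyact0 (v : V) : act 0 v = 0.
Proof. by rewrite /polyactR size_poly0 big_ord0. Qed.

Lemma polyactD (c d : {poly R}) v : act (c + d) v = act c v + act d v.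
Proof.
have le_cd : (size (c + d)%R <= size c + size d)%N.
  by apply: leq_trans (size_polyD _ _) _; rewrite geq_max leq_addr leq_addl.
rewrite (polyact_widen v le_cd) (polyact_widen v (leq_addr (size d) _)).
rewrite (polyact_widen v (leq_addl (size c) _)) -big_split.
by apply: eq_bigr => k _; rewrite coefD (scDl modV).
Qed.

Lemma polyact_sum n (c : 'I_n -> {poly R}) (v : V) :
  act (\sum_(i < n) c i) v = \sum_(i < n) act (c i) v.
Proof. exact: (big_morph (act^~ v) (fun c d => polyactD c d v) (polyact0 v)). Qed.

Lemma iter_tactD k : {morph iter k tact : x y / x + y}.
Proof. by elim: k => //= k IHk x y; rewrite -(tactD modV) -IHk. Qed.

Lemma polyactDr (c : {poly R}) : {morph act c : x y / x + y}.
Proof.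
move=> x y; rewrite /polyactR -big_split.
by apply: eq_bigr => k _; rewrite iter_tactD (scDr modV).
Qed.

Lemma polyact0r (c : {poly R}) : act c 0 = 0.
Proof. by apply: (addrI (act c 0)); rewrite -polyactDr !addr0. Qed.

Lemma polyact_sumr n (c : {poly R}) (w : 'I_n -> V) :
  act c (\sum_(j < n) w j) = \sum_(j < n) act c (w j).
Proof. exact: (big_morph (act c) (polyactDr c) (polyact0r c)). Qed.

Lemma sc_polyact a (d : {poly R}) w : sc a (act d w) = act (a *: d) w.
Proof.
rewrite (polyact_widen w (size_scale_leq a d)) (big_morph (sc a) (scDr modV a) (scr0 a)).
by apply: eq_bigr => k _; rewrite coefZ (scA modV).
Qed.

Lemma tact_polyact (d : {poly R}) w : tact (act d w) = act d (tact w).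
Proof.
rewrite (big_morph tact (tactD modV) tact0); apply: eq_bigr => k _.
by rewrite (tact_sc modV) -iterSr.
Qed.

Lemma polyactXM (d : {poly R}) v : act ('X * d) v = act d (tact v).
Proof.
have le_Xd : (size ('X * d)%R <= (size d).+1)%N.
  by apply: leq_trans (size_polyMleq _ _) _; rewrite size_polyX.
rewrite (polyact_widen v le_Xd) big_ord_recl coefXM /= sc0 add0r.
by apply: eq_bigr => k _; rewrite coefXM /= -iterSr.
Qed.

Lemma polyactXnM k (d : {poly R}) v : act ('X^k * d) v = act d (iter k tact v).
Proof.
elim: k v => [|k IHk] v; first by rewrite expr0 mul1r.
by rewrite exprS -mulrA polyactXM IHk -iterSr.
Qed.

Lemma polyactM (c d : {poly R}) v : act (c * d) v = act c (act d v).
Proof.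
rewrite -{1}(coefK c) poly_def mulr_suml polyact_sum; apply: eq_bigr => k _.
rewrite -scalerAl -sc_polyact polyactXnM.
by congr (sc _ _); elim: (nat_of_ord k) => //= m IHm; rewrite -IHm tact_polyact.
Qed.

Lemma polyact_scaleXn (a : R) k v : act (a *: 'X^k) v = sc a (iter k tact v).
Proof.
rewrite -['X^k]mulr1 scalerAr polyactXnM -sc_polyact.
by rewrite /polyactR size_poly1 big_ord1 coef1 /= (scale1 modV).
Qed.

Definition generates k (b : 'I_k -> V) :=
  forall w, exists x : 'I_k -> {poly R}, w = \sum_(j < k) act (x j) (b j).

Lemma lin_indep_widen m n (le_mn : (m <= n)%N) (v : 'I_n -> V) :
  lin_indepR sc tact v -> lin_indepR sc tact (fun i : 'I_m => v (widen_ord le_mn i)).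
Proof.
move=> indep c c_rel i.
pose c' (j : 'I_n) := if insub (val j) is Some i' then c i' else 0.
have c'_rel : \sum_(j < n) act (c' j) (v j) = 0.
  rewrite (bigID (fun j : 'I_n => (j < m)%N)) /= big_ord_narrow.
  rewrite [X in _ + X]big1 ?addr0 => [|j /negbTE j_ge_m]; last first.
    by rewrite /c' insubF ?polyact0.
  by rewrite -[RHS]c_rel; apply: eq_bigr => j _; rewrite /c' /= valK.
by have := indep c' c'_rel (widen_ord le_mn i); rewrite /c' /= valK.
Qed.

Lemma lin_dep_of_left_kernel n k (b : 'I_k -> V) (v : 'I_n -> V)
    (A : 'M[{poly R}]_(n, k)) (d : 'rV_n) :
  (forall i, v i = \sum_(j < k) act (A i j) (b j)) -> d != 0 -> d *m A = 0 ->
  ~ lin_indepR sc tact v.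
Proof.
move=> vA /eqP d_neq0 dA indep; apply: d_neq0; apply/rowP => i; rewrite mxE.
apply: (indep (d 0)) => {i}.
under eq_bigr do rewrite vA polyact_sumr.
rewrite exchange_big big1 // => j _.
under eq_bigr do rewrite -polyactM.
rewrite -polyact_sum; have := congr1 (fun B : 'M_(1, k) => B 0 j) dA.
by rewrite !mxE => ->; exact: polyact0.
Qed.

Lemma lin_indep_le_generators k (b : 'I_k -> V) :
  generates b -> rows_dependent {poly R} k.+1 k ->
  forall n (v : 'I_n -> V), lin_indepR sc tact v -> (n <= k)%N.
Proof.
move=> gen dep n v indep; rewrite leqNgt; apply/negP => lt_kn.
have [x vx] := fin_all_exists (fun i : 'I_k.+1 => gen (v (widen_ord lt_kn i))).
have [d d_neq0 dA] := dep (\matrix_(i, j) x i j).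
have indep_w := lin_indep_widen (le_mn := lt_kn) indep.
apply: (lin_dep_of_left_kernel _ d_neq0 dA indep_w) => i.
by rewrite vx; apply: eq_bigr => j _; rewrite mxE.
Qed.

Lemma has_rankR_of_basis k (b : 'I_k -> V) :
  generates b -> lin_indepR sc tact b -> rows_dependent {poly R} k.+1 k ->
  has_rankR sc tact k.
Proof. by move=> gen indep dep; split; [exists b | exact: lin_indep_le_generators]. Qed.

End PolyAction.

Lemma polyact_morph (V W : zmodType) (sc : R -> V -> V) (tact : V -> V)
    (sc' : R -> W -> W) (tact' : W -> W) (h : V -> W) :
  {morph h : x y / x + y} -> (forall a, {morph h : x / sc a x >-> sc' a x}) ->
  {morph h : x / tact x >-> tact' x} ->
  forall c v, h (polyactR sc tact c v) = polyactR sc' tact' c (h v).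
Proof.
move=> hD hsc htact c v; have h0 : h 0 = 0 by apply: (addrI (h 0)); rewrite -hD !addr0.
rewrite /polyactR (big_morph h hD h0); apply: eq_bigr => k _.
by rewrite hsc; congr (sc' _ _); elim: (nat_of_ord k) => //= m <-; rewrite htact.
Qed.

End RtModules.

Section TwistedPolynomials.
Variable R : comNzRingType.

Definition frobR (n : nat) (x : R) : R := x ^+ (2 ^ n).

Definition tmulR (p q : {poly R}) : {poly R} :=
  \sum_(i < size p) \sum_(j < size q) (p`_i * frobR i q`_j) *: 'X^(i + j).

Definition tmxmulR m n k (A : 'M[{poly R}]_(m, n)) (B : 'M[{poly R}]_(n, k)) :
  'M[{poly R}]_(m, k) := \matrix_(i, j) \sum_(l < n) tmulR (A i l) (B l j).

Lemma frobR0 i : frobR i 0 = 0.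
Proof. by rewrite /frobR expr0n expn_eq0. Qed.

Lemma frobR1 i : frobR i 1 = 1.
Proof. by rewrite /frobR expr1n. Qed.

Lemma frobR_id x : frobR 0 x = x.
Proof. by rewrite /frobR expn0 expr1. Qed.

Lemma tmulR_widen m n (p q : {poly R}) : (size p <= m)%N -> (size q <= n)%N ->
  tmulR p q = \sum_(i < m) \sum_(j < n) (p`_i * frobR i q`_j) *: 'X^(i + j).
Proof.
move=> le_pm le_qn; rewrite /tmulR.
pose F i := \sum_(j < size q) (p`_i * frobR i q`_j) *: 'X^(i + j).
rewrite (sum_ord_widen (F := F) le_pm).
  apply: eq_bigr => i _.
  apply: (sum_ord_widen (F := fun j => (p`_i * frobR i q`_j) *: 'X^(i + j)) le_qn) => j le_qj.
  by rewrite (nth_default 0 le_qj) frobR0 mulr0 scale0r.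
by move=> i le_pi; apply: big1 => j _; rewrite (nth_default 0 le_pi) mul0r scale0r.
Qed.

Lemma tmulR0l (q : {poly R}) : tmulR 0 q = 0.
Proof. by rewrite /tmulR size_poly0 big_ord0. Qed.

Lemma tmulR0r (p : {poly R}) : tmulR p 0 = 0.
Proof. by rewrite /tmulR size_poly0; apply: big1 => i _; rewrite big_ord0. Qed.

Lemma tmulRDl (p p' q : {poly R}) : tmulR (p + p') q = tmulR p q + tmulR p' q.
Proof.
have le_pp' : (size (p + p')%R <= size p + size p')%N.
  by apply: leq_trans (size_polyD _ _) _; rewrite geq_max leq_addr leq_addl.
rewrite (tmulR_widen le_pp' (leqnn _)) (tmulR_widen (leq_addr (size p') _) (leqnn _)).
rewrite (tmulR_widen (leq_addl (size p) _) (leqnn _)) -big_split; apply: eq_bigr => i _.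
by rewrite -big_split; apply: eq_bigr => j _; rewrite coefD mulrDl scalerDl.
Qed.

Lemma tmulRZl (a : R) (p q : {poly R}) : tmulR (a *: p) q = a *: tmulR p q.
Proof.
rewrite (tmulR_widen (size_scale_leq _ _) (leqnn _)) /tmulR scaler_sumr.
apply: eq_bigr => i _; rewrite scaler_sumr; apply: eq_bigr => j _.
by rewrite coefZ scalerA mulrA.
Qed.

Lemma tmulR1r (p : {poly R}) : tmulR p 1 = p.
Proof.
rewrite (tmulR_widen (leqnn _) (eq_leq (size_poly1 R))) -[RHS]coefK poly_def.
apply: eq_bigr => i _; rewrite big_ord1 addn0.
by rewrite coef1 frobR1 mulr1.
Qed.

Lemma tmulRCl (c : R) (q : {poly R}) : tmulR c%:P q = c *: q.
Proof.
rewrite -{2}(coefK q) poly_def scaler_sumr.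
rewrite (tmulR_widen (size_polyC_leq1 c) (leqnn _)) big_ord1.
apply: eq_bigr => j _; rewrite add0n.
by rewrite coefC frobR_id scalerA.
Qed.

End TwistedPolynomials.

Section TauModules.
Variables (R : fieldType) (T : R).

Definition PhiTR : 'M[{poly R}]_2 :=
  \matrix_(i < 2, j < 2)
    ((if i == j then T%:P else 0)
     + (if (val i == 0%N) && (val j == 1%N) then 1 else 0)
     + (if (val i == 1%N) && (val j == 0%N) then 'X else 0)).

Definition PsitR : 'M[{poly R}]_2 := tmxmulR PhiTR PhiTR.

Definition Psi_diag : {poly R} := (T * T)%:P + 'X.

Lemma PhiTR00 : PhiTR 0 0 = T%:P. Proof. by rewrite mxE /= !addr0. Qed.
Lemma PhiTR01 : PhiTR 0 1 = 1. Proof. by rewrite mxE /= add0r addr0. Qed.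
Lemma PhiTR10 : PhiTR 1 0 = 'X. Proof. by rewrite mxE /= !add0r. Qed.
Lemma PhiTR11 : PhiTR 1 1 = T%:P. Proof. by rewrite mxE /= !addr0. Qed.

Lemma PsitRE i j :
  PsitR i j = tmulR (PhiTR i 0) (PhiTR 0 j) + tmulR (PhiTR i 1) (PhiTR 1 j).
Proof. by rewrite mxE sum_ord2. Qed.

Lemma PsitR00 : PsitR 0 0 = Psi_diag.
Proof.
by rewrite PsitRE PhiTR00 PhiTR01 PhiTR10 !tmulRCl scale1r scale_polyC.
Qed.

Lemma PsitR11 : PsitR 1 1 = Psi_diag.
Proof.
by rewrite PsitRE PhiTR10 PhiTR01 PhiTR11 tmulR1r tmulRCl scale_polyC addrC.
Qed.

Lemma PsitR01 : PsitR 0 1 = (T *+ 2)%:P.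
Proof.
by rewrite PsitRE PhiTR00 PhiTR01 PhiTR11 tmulR1r tmulRCl scale1r polyCMn mulr2n.
Qed.

Definition sc1R (a : R) (g : {poly R}) : {poly R} := a *: g.
Definition tact1R (g : {poly R}) : {poly R} := tmulR g (PsitR 1 1).
Local Notation act1 := (polyactR sc1R tact1R).

Lemma is_Rt_module1 : is_Rt_module sc1R tact1R.
Proof.
split=> [a g h|a b g|a b g|g|g h|a g]; rewrite /sc1R /tact1R.
- exact: scalerDr.
- exact: scalerDl.
- exact: scalerA.
- exact: scale1r.
- exact: tmulRDl.
- exact: tmulRZl.
Qed.

Lemma tact1RE (g : {poly R}) :
  tact1R g = g * 'X + \poly_(i < size g) (g`_i * frobR i (T * T)).
Proof.
have le_Psi : (size Psi_diag <= 2)%N.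
  apply: leq_trans (size_polyD _ _) _.
  by rewrite geq_max size_polyX (leq_trans (size_polyC_leq1 _)).
have -> : g * 'X = \sum_(i < size g) g`_i *: 'X^(i + 1).
  rewrite -{1}(coefK g) poly_def mulr_suml; apply: eq_bigr => i _.
  by rewrite -scalerAl -exprSr addn1.
rewrite /tact1R PsitR11 (tmulR_widen (leqnn _) le_Psi) poly_def addrC -big_split.
apply: eq_bigr => i _; rewrite sum_ord2 /Psi_diag !coefD !coefC !coefX /=.
by rewrite addr0 add0r addn0 frobR1 mulr1 addrC.
Qed.

Lemma size_tact1R (g : {poly R}) : g != 0 -> size (tact1R g) = (size g).+1.
Proof.
move=> g_neq0; have size_gX : size (g * 'X) = (size g).+1 := size_mulX g_neq0.
by rewrite tact1RE size_polyDl size_gX // ltnS size_poly.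
Qed.

Lemma lead_coef_tact1R (g : {poly R}) : lead_coef (tact1R g) = lead_coef g.
Proof.
have [->|g_neq0] := eqVneq g 0; first by rewrite /tact1R tmulR0l.
have size_gX : size (g * 'X) = (size g).+1 := size_mulX g_neq0.
by rewrite tact1RE lead_coefDl ?lead_coefMX // size_gX ltnS size_poly.
Qed.

Lemma lead_coef_iter_tact1R k : lead_coef (iter k tact1R 1) = 1.
Proof. by elim: k => [|k IHk]; rewrite ?lead_coef1 //= lead_coef_tact1R. Qed.

Lemma size_iter_tact1R k : size (iter k tact1R 1) = k.+1.
Proof.
elim: k => [|k IHk]; first by rewrite size_poly1.
rewrite /= size_tact1R ?IHk // -lead_coef_eq0 lead_coef_iter_tact1R.
exact: oner_neq0.
Qed.

Lemma size_sum_iter_tact1R n (a : nat -> R) :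
  (size (\sum_(k < n) a k *: iter k tact1R 1)%R <= n)%N.
Proof.
elim: n => [|n IHn]; first by rewrite big_ord0 size_poly0.
rewrite big_ord_recr /=; apply: leq_trans (size_polyD _ _) _.
rewrite geq_max (leq_trans IHn) //.
by apply: leq_trans (size_scale_leq _ _) _; rewrite size_iter_tact1R.
Qed.

Lemma size_polyact1 (c : {poly R}) : size (act1 c 1) = size c.
Proof.
have [->|c_neq0] := eqVneq c 0; first by rewrite polyact0 size_poly0.
have [n size_c] : exists n, size c = n.+1.
  by exists (size c).-1; rewrite prednK ?size_poly_gt0.
have lc_neq0 : c`_n != 0 by rewrite -[n]/(n.+1.-1) -size_c -lead_coefE lead_coef_eq0.
rewrite /polyactR size_c big_ord_recr /= addrC size_polyDl.
  by rewrite /sc1R size_scale // size_iter_tact1R.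
by rewrite /sc1R size_scale // size_iter_tact1R ltnS size_sum_iter_tact1R.
Qed.

Lemma polyact1_surj (g : {poly R}) : exists c, g = act1 c 1.
Proof.
move: {2}(size g) (leqnn (size g)) => n; elim: n g => [|n IHn] g le_gn.
  by exists 0; rewrite polyact0; apply/eqP; rewrite -size_poly_leq0.
pose u := iter n tact1R 1; pose h := g - g`_n *: u.
have u_n : u`_n = 1 by rewrite -(lead_coef_iter_tact1R n) lead_coefE size_iter_tact1R.
have le_hn : (size h <= n)%N.
  apply/leq_sizeP => j; rewrite leq_eqVlt => /orP[/eqP <-|lt_nj].
    by rewrite coefB coefZ u_n mulr1 subrr.
  have le_gj : (size g <= j)%N := leq_trans le_gn lt_nj.
  have le_uj : (size u <= j)%N by rewrite size_iter_tact1R.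
  by rewrite coefB coefZ (nth_default _ le_gj) (nth_default _ le_uj) mulr0 subr0.
have [c hc] := IHn h le_hn; exists (c + g`_n *: 'X^n).
by rewrite (polyactD is_Rt_module1) (polyact_scaleXn is_Rt_module1) -hc /h subrK.
Qed.

Lemma polyact1_eq0 (c : {poly R}) : act1 c 1 = 0 -> c = 0.
Proof. by move/eqP; rewrite -size_poly_eq0 size_polyact1 size_poly_eq0 => /eqP. Qed.

Lemma has_rank1 : has_rankR sc1R tact1R 1.
Proof.
apply: (has_rankR_of_basis is_Rt_module1 (b := fun=> 1)) => [g|c|].
- by have [c ->] := polyact1_surj g; exists (fun=> c); rewrite big_ord1.
- by rewrite big_ord1 => /polyact1_eq0 c0 i; rewrite (ord1 i).
- exact: rows_dependent_2_1.
Qed.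

Hypothesis char2 : 2%:R = 0 :> R.

Lemma PsitR01_char2 : PsitR 0 1 = 0.
Proof. by rewrite PsitR01 -mulr_natr char2 mulr0. Qed.

Definition sc2R (a : R) (f : 'rV[{poly R}]_2) : 'rV[{poly R}]_2 :=
  map_mx (fun p => a *: p) f.
Definition tact2R (f : 'rV[{poly R}]_2) : 'rV[{poly R}]_2 := tmxmulR f PsitR.
Local Notation act2 := (polyactR sc2R tact2R).

Lemma is_Rt_module2 : is_Rt_module sc2R tact2R.
Proof.
split=> [a f f'|a b f|a b f|f|f f'|a f]; apply/rowP => j; rewrite !mxE.
- exact: scalerDr.
- exact: scalerDl.
- exact: scalerA.
- exact: scale1r.
- by rewrite -big_split; apply: eq_bigr => k _; rewrite mxE tmulRDl.
- by rewrite scaler_sumr; apply: eq_bigr => k _; rewrite mxE tmulRZl.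
Qed.

Definition rowv (g h : {poly R}) : 'rV[{poly R}]_2 := \row_j [:: g; h]`_j.

Lemma rowvE (f : 'rV[{poly R}]_2) : f = rowv (f 0 0) (f 0 1).
Proof. by apply/rowP => j; rewrite mxE; case: (ord2 j) => ->. Qed.

Lemma polyact2_snd c f : (act2 c f) 0 1 = act1 c (f 0 1).
Proof.
apply: (polyact_morph (h := fun f : 'rV_2 => f 0 1)) => [f1 f2|a f1|f1]; rewrite !mxE //.
by rewrite sum_ord2 PsitR01_char2 tmulR0r add0r.
Qed.

Lemma polyact2_fst c g : act2 c (rowv g 0) = rowv (act1 c g) 0.
Proof.
symmetry; apply: (polyact_morph (h := rowv^~ 0)) => [g1 g2|a g1|g1]; apply/rowP => j.
- by rewrite !mxE; case: (ord2 j) => ->; rewrite /= ?addr0.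
- by rewrite !mxE; case: (ord2 j) => ->; rewrite /= ?scaler0.
rewrite [RHS]mxE sum_ord2 ![rowv _ _ _ _]mxE /= tmulR0l addr0 /tact1R.
by case: (ord2 j) => ->; rewrite /= ?PsitR00 ?PsitR11 ?PsitR01_char2 ?tmulR0r.
Qed.

Definition basis2 (i : 'I_2) : 'rV[{poly R}]_2 := [:: rowv 1 0; rowv 0 1]`_i.

Lemma has_rank2 : has_rankR sc2R tact2R 2.
Proof.
apply: (has_rankR_of_basis is_Rt_module2 (b := basis2)) => [f|c|].
- have [d fd] := polyact1_surj (f 0 1); pose w := f - act2 d (rowv 0 1).
  have w01 : w 0 1 = 0 by rewrite !mxE polyact2_snd mxE /= -fd subrr.
  have [c wc] := polyact1_surj (w 0 0).
  exists (fun i => [:: c; d]`_i); rewrite sum_ord2 /= polyact2_fst -wc -w01 -rowvE.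
  by rewrite subrK.
- rewrite sum_ord2 => c_rel.
  have c1 : c 1 = 0.
    have /(congr1 (fun f : 'rV_2 => f 0 1)) := c_rel.
    rewrite !mxE !polyact2_snd !mxE /= (polyact0r is_Rt_module1) add0r.
    exact: polyact1_eq0.
  have c0 : c 0 = 0.
    move: c_rel; rewrite c1 polyact0 addr0 polyact2_fst.
    by move=> /(congr1 (fun f : 'rV_2 => f 0 0)); rewrite !mxE => /polyact1_eq0.
  by move=> i; case: (ord2 i) => ->.
- exact: rows_dependent_3_2.
Qed.

End TauModules.

Lemma char2_FF : 2%:R = 0 :> FF.
Proof.
rewrite -tofrac1 -tofracMn -tofrac0; congr tofrac.
by rewrite -polyC1 -polyCMn (pchar_Fp_0 (isT : prime 2)).
Qed.

Close Scope ring_scope.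

Theorem proposition6 :
  has_rank sc2 tact2 2 /\ stable_0xGa /\ has_rank sc1 tact1 1.
Proof.
split; [|split].
- exact (has_rank2 Tf char2_FF).
- exact (PsitR01_char2 Tf char2_FF).
- exact (has_rank1 Tf).
Qed.
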